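(* Let $X$ be a compact $\mathbb{R}$-tree. Then no branch point of $X$ belongs to the support of the diversity-maximizing measure of $X$.
   Context: An $\mathbb{R}$-tree is a uniquely geodesic metric space (any two points $x,y$ are joined by a unique segment $\llbracket x,y\rrbracket$, a subset isometric to a compact interval with endpoints $x,y$) such that $\llbracket x,z\rrbracket\subseteq\llbracket x,y\rrbracket\cup\llbracket y,z\rrbracket$ for all $x,y,z$. The degree of a point $x$ is the number of connected components of $X\setminus\{x\}$; branch points are points of degree at least $3$. For a compact metric space $X$, the diversity-maximizing measure is a Borel probability measure $\mu$ minimizing $\int_X\int_X e^{-d(x,y)}\mu(dx)\mu(dy)$ over all Borel probability measures; compact $\mathbb{R}$-trees are of negative type, so such a minimizer exists and is unique. The support of $\mu$ is its closed support. *)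

From HB Require Import structures.
From mathcomp Require Import all_boot all_order all_algebra.
From mathcomp Require Import all_classical all_reals all_analysis.

Set Implicit Arguments. Unset Strict Implicit. Unset Printing Implicit Defensive.
Import Order.TTheory GRing.Theory Num.Theory.
Local Open Scope classical_set_scope.
Local Open Scope ring_scope.

(* A nonempty metric space: library metric structure (distance [mdist],
   balls/topology induced by [mdist]) together with a distinguished point,
   which the library's measurable-type hierarchy requires. *)
#[short(type="pointedMetricType")]
HB.structure Definition PointedMetric (K : numDomainType) :=
  { M of Metric K M & Pointed M }.

Section RTree.
Context {R : realType} (T : pointedMetricType R).
Local Notation d := (@mdist R T).

Definition is_segment (x y : T) (S : set T) : Prop :=
  exists g : R -> T,
    [/\ g 0 = x, g (d x y) = y,
        (forall s t : R, 0 <= s <= d x y -> 0 <= t <= d x y ->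
            d (g s) (g t) = `|s - t|) &
        S = g @` `[0, d x y]].

Definition uniquely_geodesic : Prop :=
  forall x y : T, exists! S : set T, is_segment x y S.

Definition R_tree : Prop :=
  uniquely_geodesic /\
  forall (x y z : T) (Sxz Sxy Syz : set T),
    is_segment x z Sxz -> is_segment x y Sxy -> is_segment y z Syz ->
    Sxz `<=` Sxy `|` Syz.

Definition branch_point (x : T) : Prop :=
  exists a b c : T,
    [/\ a <> x, b <> x, c <> x &
    [/\ connected_component [set~ x] a <> connected_component [set~ x] b,
        connected_component [set~ x] a <> connected_component [set~ x] c &
        connected_component [set~ x] b <> connected_component [set~ x] c]].

Definition borel := g_sigma_algebraType (@open T).

Definition energy (mu : probability borel R) : \bar R :=
  (\int[mu]_x \int[mu]_y (expR (- d x y))%:E)%E.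

Definition diversity_maximizing (mu : probability borel R) : Prop :=
  forall nu : probability borel R, (energy mu <= energy nu)%E.

Definition closed_support (mu : probability borel R) : set T :=
  [set x : T | forall U : set T, open U -> U x -> (0 < mu (U : set borel))%E].

End RTree.

Arguments energy {R T} mu.
Arguments diversity_maximizing {R T} mu.
Arguments closed_support {R T} mu _.

From HB Require Import structures.
From mathcomp Require Import all_boot all_order all_algebra.
From mathcomp Require Import all_classical all_reals all_analysis.
From mathcomp Require Import ring lra measurable_realfun.

Set Implicit Arguments. Unset Strict Implicit. Unset Printing Implicit Defensive.
Import Order.TTheory GRing.Theory Num.Theory numFieldNormedType.Exports.
Local Open Scope classical_set_scope.
Local Open Scope ring_scope.

(* Let P x = \int e^{-d(x,y)} dmu(y) be the potential of mu and c = \int P dmu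
   its energy.  Shifting a little mass of mu towards a Dirac mass at z changes
   the energy by 2t (P z - c) + O(t^2), so P >= c everywhere; P is 1-Lipschitz,
   hence P = c on the support.  Suppose a branch point x is in the support and
   pick z_1, z_2, z_3 at a small distance s from x in three components of
   X \ {x}.  A point y is on the side of z_i when d(z_i,y) < d(z_i,x) + d(x,y);
   the geodesic from z_i to y then avoids x, so the three sides are disjoint.
   Splitting P z_i along the side of z_i gives
   c <= P z_i <= e^{-s} c + (e^s - e^{-s}) A_i with A_1 + A_2 + A_3 <= P x = c,
   and summing yields c (3 - 2 e^{-s} - e^s) <= 0, impossible for small s since
   c > 0. *)

Section metric.
Context {R : realType} {T : metricType R}.
Local Notation d := (@mdist R T).

Lemma lipschitz1_continuous (f : T -> R) :
  (forall y z, `|f y - f z| <= d y z) -> continuous f.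
Proof.
move=> f_lip y; apply/cvgrPdist_lt => e e0.
near=> z.
have : ball y e z by near: z; exact: nbhsx_ballx.
by rewrite ballEmdist /=; exact: le_lt_trans.
Unshelve. all: by end_near.
Qed.

Lemma mdist_lipschitz1 x y z : `|d x y - d x z| <= d y z.
Proof.
have := metric_triangle x y z; have := metric_triangle x z y.
by rewrite (metric_sym z y) ler_norml => ? ?; apply/andP; split; lra.
Qed.

Lemma continuous_mdist x : continuous (d x).
Proof. exact/lipschitz1_continuous/mdist_lipschitz1. Qed.

Lemma open_continuous_lt (f : T -> R) (r : R) :
  continuous f -> open [set y | f y < r].
Proof.
move=> /continuousP f_cont.
have -> : [set y | f y < r] = f @^-1` `]-oo, r[.
  by apply/seteqP; split => y /=; rewrite in_itv.
by apply: f_cont; exact: interval_open.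
Qed.

End metric.

Definition geodesic_space {R : realType} (T : pointedMetricType R) : Prop :=
  forall x y : T, exists S, is_segment x y S.

Lemma uniquely_geodesic_geodesic {R : realType} (T : pointedMetricType R) :
  uniquely_geodesic T -> geodesic_space T.
Proof. by move=> ugT x y; have [S [segS _]] := ugT x y; exists S. Qed.

Section geodesic.
Context {R : realType} {T : pointedMetricType R}.
Local Notation d := (@mdist R T).

Definition side (x z : T) : set T := [set y | d z y < d z x + d x y].

Lemma connected_isometric_image (g : R -> T) (D : R) :
  (forall u v, 0 <= u <= D -> 0 <= v <= D -> d (g u) (g v) = `|u - v|) ->
  connected (g @` `[0, D]).
Proof.
move=> g_iso; apply: connected_continuous_connected.
  by apply/connected_intervalP; exact: interval_is_interval.
apply/subspace_continuousP => t /= tD.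
apply/cvg_ballP => e e0.
rewrite near_withinE; near=> u => uD.
by rewrite ballEmdist /= g_iso //; near: u; exact: nbhsx_ballx.
Unshelve. all: by end_near.
Qed.

Hypothesis geoT : geodesic_space T.

Lemma geodesic_isometry (x y : T) : exists g : R -> T,
  [/\ g 0 = x, g (d x y) = y &
    forall u v, 0 <= u <= d x y -> 0 <= v <= d x y -> d (g u) (g v) = `|u - v|].
Proof. by have [S [g [g0 gd g_iso _]]] := geoT x y; exists g. Qed.

Lemma side_connected_component (x z y : T) :
  side x z y -> connected_component [set~ x] z y.
Proof.
rewrite /side /= => zxy.
have [g [g0 gd g_iso]] := geodesic_isometry z y.
have d0 : 0 <= d z y by exact: mdist_ge0.
apply: (@connected_component_max _ _ (g @` `[0, d z y])).
- by exists 0 => //=; rewrite in_itv /= lexx d0.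
- move=> _ [u uD <-] gux; move: uD => /=; rewrite in_itv /= => /andP[u0 ud].
  have dzx : d z x = u.
    by rewrite -g0 -gux g_iso ?lexx ?d0 ?u0 // sub0r normrN ger0_norm.
  have dxy : d x y = d z y - u.
    by rewrite -{1}gux -{1}gd g_iso ?lexx ?d0 ?u0 // distrC ger0_norm // subr_ge0.
  by move: zxy; rewrite dzx dxy; lra.
- exact: connected_isometric_image.
- by exists (d z y) => //=; rewrite in_itv /= lexx d0.
Qed.

Lemma exists_mdist_connected_component (x a : T) (s : R) :
  0 < s <= d x a -> exists z : T, d x z = s /\ connected_component [set~ x] z a.
Proof.
move=> /andP[s0 sd]; have [g [g0 gd g_iso]] := geodesic_isometry x a.
have d0 : 0 <= d x a by exact: mdist_ge0.
have dxg : d x (g s) = s.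
  by rewrite -{1}g0 g_iso ?lexx ?d0 ?(ltW s0) // sub0r normrN gtr0_norm.
have dga : d (g s) a = d x a - s.
  by rewrite -{1}gd g_iso ?lexx ?d0 ?(ltW s0) // distrC ger0_norm // subr_ge0.
exists (g s); split => //; apply: side_connected_component.
by rewrite /side /= dga (metric_sym _ x) dxg; lra.
Qed.

Lemma disjoint_sides (x za zb : T) :
  connected_component [set~ x] za <> connected_component [set~ x] zb ->
  [disjoint side x za & side x zb].
Proof.
move=> za_zb; apply/disj_setPS => y [].
move=> /side_connected_component/same_connected_component ya.
move=> /side_connected_component/same_connected_component yb.
by apply: za_zb; rewrite ya yb.
Qed.

Lemma branch_point_disjoint_sides x : branch_point x ->
  exists2 s0 : R, 0 < s0 & forall s, 0 < s <= s0 -> exists za zb zc : T,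
    [/\ d x za = s, d x zb = s, d x zc = s &
     [/\ [disjoint side x za & side x zb], [disjoint side x za & side x zc] &
         [disjoint side x zb & side x zc]]].
Proof.
move=> [a [b [c [ax bx cx [ab ac bc]]]]].
have d_gt0 w : w <> x -> 0 < d x w.
  by move=> wx; rewrite mdist_gt0; apply/eqP => xw; apply: wx.
exists (Num.min (d x a) (Num.min (d x b) (d x c))); first by rewrite !lt_min !d_gt0.
move=> s /andP[s_gt0]; rewrite !le_min => /andP[sa /andP[sb sc]].
have toward w : s <= d x w ->
    exists z, d x z = s /\ connected_component [set~ x] z w.
  by move=> sw; apply: exists_mdist_connected_component; rewrite s_gt0 sw.
have [za [dza /same_connected_component za_a]] := toward a sa.
have [zb [dzb /same_connected_component zb_b]] := toward b sb.
have [zc [dzc /same_connected_component zc_c]] := toward c sc.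
exists za, zb, zc; split => //; split; apply: disjoint_sides.
- by rewrite za_a zb_b.
- by rewrite za_a zc_c.
- by rewrite zb_b zc_c.
Qed.

End geodesic.

Section measure_Rintegral.
Context d (X : measurableType d) (R : realType).
Variable mu : {measure set X -> \bar R}.

Lemma Rintegral_EFin (f : X -> R) : mu.-integrable setT (EFin \o f) ->
  (\int[mu]_y (f y)%:E)%E = (\int[mu]_y f y)%:E.
Proof. by move=> intf; rewrite fineK //; exact: integrable_fin_num. Qed.

Lemma Rintegral_indic (U : set X) : measurable U ->
  \int[mu]_y \1_U y = fine (mu U).
Proof. by move=> mU; rewrite /Rintegral integral_indic // setIT. Qed.

Lemma integrableZl_EFin (a : R) (f : X -> R) :
  mu.-integrable setT (EFin \o f) ->
  mu.-integrable setT (EFin \o (fun y => a * f y)).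
Proof.
move=> intf; have -> : EFin \o (fun y => a * f y) = (fun y => a%:E * (f y)%:E)%E.
  by apply/funext => y; rewrite /= EFinM.
exact: integrableZl.
Qed.

Lemma integrableD_EFin (f g : X -> R) :
  mu.-integrable setT (EFin \o f) -> mu.-integrable setT (EFin \o g) ->
  mu.-integrable setT (EFin \o (fun y => f y + g y)).
Proof.
move=> intf intg; have -> : EFin \o (fun y => f y + g y) =
  (EFin \o f) \+ (EFin \o g) by apply/funext => y; rewrite /= EFinD.
exact: integrableD.
Qed.

Lemma integrable_lin (a b : R) (f g : X -> R) :
  mu.-integrable setT (EFin \o f) -> mu.-integrable setT (EFin \o g) ->
  mu.-integrable setT (EFin \o (fun y => a * f y + b * g y)).
Proof. by move=> intf intg; apply: integrableD_EFin; exact: integrableZl_EFin. Qed.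

Lemma Rintegral_lin (a b : R) (f g : X -> R) :
  mu.-integrable setT (EFin \o f) -> mu.-integrable setT (EFin \o g) ->
  \int[mu]_y (a * f y + b * g y) = a * \int[mu]_y f y + b * \int[mu]_y g y.
Proof.
by move=> intf intg; rewrite RintegralD ?RintegralZl // integrableZl_EFin.
Qed.

End measure_Rintegral.

Section finite_measure_Rintegral.
Context d (X : measurableType d) (R : realType).
Variable mu : {finite_measure set X -> \bar R}.

Lemma bounded_integrable (f : X -> R) (M : R) :
  measurable_fun setT f -> (forall y, `|f y| <= M) ->
  mu.-integrable setT (EFin \o f).
Proof.
move=> mf f_le.
apply: (le_integrable measurableT _ _ (finite_measure_integrable_cst mu M measurableT)).
  exact/measurable_EFinP.
by move=> y _; rewrite lee_fin (le_trans (f_le y)) // ler_norm.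
Qed.

Lemma Rintegral_gap (f g : X -> R) (U : set X) (e : R) : measurable U ->
  mu.-integrable setT (EFin \o f) -> mu.-integrable setT (EFin \o g) ->
  (forall y, f y + e * \1_U y <= g y) ->
  \int[mu]_y f y + e * fine (mu U) <= \int[mu]_y g y.
Proof.
move=> mU intf intg fg; have inti := integrable_indic mu mU.
rewrite -Rintegral_indic // -[X in X + _]mul1r -Rintegral_lin //.
apply: le_Rintegral => //; first exact: integrable_lin.
by move=> y _; rewrite mul1r.
Qed.

End finite_measure_Rintegral.

Section borel.
Context {R : realType} {T : pointedMetricType R}.

Lemma measurable_fun_continuous (f : T -> R) :
  continuous f -> measurable_fun [set: borel T] (f : borel T -> R).
Proof.
move=> /continuousP f_cont.
apply: (measurability _ (RGenOpens.measurableE R)) => _ [_ [a [b ->] <-]].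
by rewrite setTI; apply: sub_sigma_algebra; apply: f_cont; exact: interval_open.
Qed.

Lemma measurable_open (U : set T) : open U -> measurable (U : set (borel T)).
Proof. exact: sub_sigma_algebra. Qed.

End borel.

Section similarity.
Context {R : realType} {T : pointedMetricType R}.
Local Notation d := (@mdist R T).

Definition similarity (x y : T) : R := expR (- d x y).

Lemma similarity_ge0 x y : 0 <= similarity x y.
Proof. exact: expR_ge0. Qed.

Lemma similarity_le1 x y : similarity x y <= 1.
Proof. by rewrite expR_le1 oppr_le0 mdist_ge0. Qed.

Lemma similarity_sym x y : similarity x y = similarity y x.
Proof. by rewrite /similarity metric_sym. Qed.

Lemma similarity_le_mul x x' y :
  expR (- d x x') * similarity x y <= similarity x' y.
Proof.
rewrite -expRD ler_expR.
by have := metric_triangle x' x y; rewrite (metric_sym x' x); lra.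
Qed.

Lemma continuous_similarity x : continuous (similarity x).
Proof.
move=> y; apply: continuous_comp; last exact: continuous_expR.
by apply: cvgN; exact: continuous_mdist.
Qed.

Lemma measurable_similarity x :
  measurable_fun setT (similarity x : borel T -> R).
Proof. by apply: measurable_fun_continuous; exact: continuous_similarity. Qed.

End similarity.

Section potential.
Context {R : realType} {T : pointedMetricType R}.
Local Notation d := (@mdist R T).
Variable mu : probability (borel T) R.

Lemma Rintegral_cst_probability (r : R) : \int[mu]_y r = r.
Proof.
by rewrite Rintegral_cst // (_ : fine _ = 1) ?mulr1 // (congr1 fine (probability_setT mu)).
Qed.

Lemma Rintegral_le1 (f : borel T -> R) :
  mu.-integrable setT (EFin \o f) -> (forall y, f y <= 1) -> \int[mu]_y f y <= 1.
Proof.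
move=> intf f_le1; rewrite -[leRHS](Rintegral_cst_probability 1).
by apply: le_Rintegral => //; exact: finite_measure_integrable_cst.
Qed.

Lemma integrable_similarity x :
  mu.-integrable setT (EFin \o similarity x : borel T -> \bar R).
Proof.
apply: (@bounded_integrable _ _ _ mu _ 1); first exact: measurable_similarity.
by move=> y; rewrite ger0_norm ?similarity_ge0 ?similarity_le1.
Qed.

Definition potential (x : T) : R := \int[mu]_y similarity x y.

Lemma potential_ge0 x : 0 <= potential x.
Proof. by apply: Rintegral_ge0 => y _; exact: similarity_ge0. Qed.

Lemma potential_le1 x : potential x <= 1.
Proof. exact: Rintegral_le1 (integrable_similarity x) (similarity_le1 x). Qed.

Lemma potential_le_mul x x' : expR (- d x x') * potential x <= potential x'.
Proof.
rewrite -RintegralZl //; last exact: integrable_similarity.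
apply: le_Rintegral => //; last by move=> y _; exact: similarity_le_mul.
  exact/integrableZl_EFin/integrable_similarity.
exact: integrable_similarity.
Qed.

Lemma potential_lipschitz1 y z : `|potential y - potential z| <= d y z.
Proof.
have := potential_le_mul y z; have := potential_le_mul z y.
have := expR_ge1Dx (- d y z); rewrite (metric_sym z y).
have := potential_le1 y; have := potential_le1 z.
have := potential_ge0 y; have := potential_ge0 z; have := mdist_ge0 y z.
move: (expR (- d y z)) => E *.
by rewrite ler_norml; apply/andP; split; nra.
Qed.

Lemma continuous_potential : continuous potential.
Proof. exact/lipschitz1_continuous/potential_lipschitz1. Qed.

Lemma integrable_potential :
  mu.-integrable setT (EFin \o potential : borel T -> \bar R).
Proof.
apply: (@bounded_integrable _ _ _ mu _ 1).
  by apply: measurable_fun_continuous; exact: continuous_potential.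
by move=> y; rewrite ger0_norm ?potential_ge0 ?potential_le1.
Qed.

Definition mean_potential : R := \int[mu]_x potential x.

Lemma energyE : energy mu = mean_potential%:E.
Proof.
rewrite -Rintegral_EFin; last exact: integrable_potential.
by apply: eq_integral => x _; rewrite Rintegral_EFin //; exact: integrable_similarity.
Qed.

Lemma mean_potential_le1 : mean_potential <= 1.
Proof. exact: Rintegral_le1 integrable_potential potential_le1. Qed.

Definition restricted_potential (S : set T) (x : T) : R :=
  \int[mu]_y (\1_S y * similarity x y).

Lemma integrable_restricted_similarity (S : set T) x :
  measurable (S : set (borel T)) ->
  mu.-integrable setT (EFin \o (fun y => \1_S y * similarity x y) : borel T -> \bar R).
Proof.
move=> mS; apply: (@bounded_integrable _ _ _ mu _ 1).
  by apply: measurable_funM; [exact: measurable_indic|exact: measurable_similarity].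
move=> y; rewrite normrM !ger0_norm ?similarity_ge0 // indicE.
by case: (_ \in _); rewrite ?mul1r ?mul0r ?similarity_le1.
Qed.

Lemma restricted_potential_sum3_le (S1 S2 S3 : set T) x :
  measurable (S1 : set (borel T)) -> measurable (S2 : set (borel T)) ->
  measurable (S3 : set (borel T)) ->
  [disjoint S1 & S2] -> [disjoint S1 & S3] -> [disjoint S2 & S3] ->
  restricted_potential S1 x + restricted_potential S2 x + restricted_potential S3 x
    <= potential x.
Proof.
move=> mS1 mS2 mS3 S12 S13 S23; have int := integrable_restricted_similarity x.
have S_le1 y : \1_S1 y + \1_S2 y + \1_S3 y <= 1 :> R.
  rewrite !indicE; case: (boolP (y \in S1)) => y1;
    case: (boolP (y \in S2)) => y2; case: (boolP (y \in S3)) => y3 /=;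
    rewrite ?inE in y1 y2 y3; rewrite ?addr0 ?add0r //; exfalso.
  - exact: (disj_setPS S12 y (conj y1 y2)).
  - exact: (disj_setPS S12 y (conj y1 y2)).
  - exact: (disj_setPS S13 y (conj y1 y3)).
  - exact: (disj_setPS S23 y (conj y2 y3)).
rewrite /restricted_potential -!RintegralD ?integrableD_EFin ?int //.
apply: le_Rintegral => //; first by rewrite ?integrableD_EFin ?int.
  exact: integrable_similarity.
move=> y _; rewrite -!mulrDl -[leRHS]mul1r ler_wpM2r //; exact: similarity_ge0.
Qed.

Lemma measurable_side (x z : T) : measurable (side x z : set (borel T)).
Proof.
apply: measurable_open.
have -> : side x z = [set y | d z y - d x y < d z x].
  by apply/seteqP; split => y; rewrite /side /= => ?; lra.
by apply: open_continuous_lt => y; apply: cvgB; exact: continuous_mdist.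
Qed.

(* Off [side x z], [x] lies between [z] and [y]: [d z y = d z x + d x y]. *)
Lemma similarity_le_side x z y : similarity z y <=
  expR (- d x z) * similarity x y +
  (expR (d x z) - expR (- d x z)) * (\1_(side x z) y * similarity x y).
Proof.
rewrite indicE; case: (boolP (y \in side x z)) => [_|]; rewrite /= ?mul1r.
  rewrite mulrBl addrCA subrr addr0.
  have := similarity_le_mul z x y; rewrite metric_sym.
  by rewrite -(ler_pM2l (expR_gt0 (d x z))) mulrA -expRD subrr expR0 mul1r.
rewrite notin_setE /side /= => /negP; rewrite -leNgt (metric_sym z x) => dzy.
by rewrite mul0r mulr0 addr0 /similarity -expRD ler_expR; lra.
Qed.

Lemma potential_le_side x z : potential z <=
  expR (- d x z) * potential x +
  (expR (d x z) - expR (- d x z)) * restricted_potential (side x z) x.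
Proof.
have int_side := integrable_restricted_similarity x (measurable_side x z).
rewrite -Rintegral_lin ?integrable_similarity //.
apply: le_Rintegral => //; first exact: integrable_similarity.
  by apply: integrable_lin => //; exact: integrable_similarity.
by move=> y _; exact: similarity_le_side.
Qed.

End potential.

Lemma mnormalize_id d (X : measurableType d) (R : realType)
    (m : {measure set X -> \bar R}) (P : probability X R) :
  m setT = 1%E -> mnormalize m P = m.
Proof.
by move=> m1; apply/funext => U; rewrite /mnormalize m1 onee_eq0 /= invr1 mule1.
Qed.

Section mixture.
Context {R : realType} {T : pointedMetricType R}.
Variables (mu : probability (borel T) R) (z : T) (t : R).
Hypotheses (t_ge0 : 0 <= t) (t_le1 : 0 <= 1 - t).

Definition mixture :=
  measure_add (mscale (NngNum t_le1) mu) (mscale (NngNum t_ge0) (@dirac _ (borel T) z R)).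

Lemma mixture_setT : mixture setT = 1%E.
Proof.
rewrite /mixture measure_addE.
change ((1 - t)%:E * mu setT + t%:E * \d_(z : borel T) setT = 1)%E.
by rewrite diracE mem_set // (_ : mu _ = 1%E) ?probability_setT // !mule1 -EFinD subrK.
Qed.

Lemma integral_mixture (f : borel T -> \bar R) :
  (forall y, 0 <= f y)%E -> measurable_fun setT f ->
  (\int[mixture]_y f y = (1 - t)%:E * \int[mu]_y f y + t%:E * f z)%E.
Proof.
move=> f0 mf; rewrite ge0_integral_measure_add //.
rewrite !ge0_integral_mscale // integral_dirac //.
by rewrite diracE mem_set // mul1e.
Qed.

Definition mixture_probability : probability (borel T) R := mnormalize mixture mu.

Lemma mixture_probabilityE : mixture_probability = mixture :> (set _ -> _).
Proof. exact: mnormalize_id mixture_setT. Qed.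

Lemma energy_mixture : energy mixture_probability =
  ((1 - t) * ((1 - t) * mean_potential mu + t * potential mu z) +
   t * ((1 - t) * potential mu z + t))%:E.
Proof.
have inner x : (\int[mixture]_y (similarity x y)%:E)%E =
    ((1 - t) * potential mu x + t * similarity z x)%:E.
  rewrite integral_mixture //; last by apply/measurable_EFinP; exact: measurable_similarity.
    by rewrite Rintegral_EFin ?integrable_similarity // similarity_sym -!EFinM -EFinD.
  by move=> y; rewrite lee_fin similarity_ge0.
rewrite /energy mixture_probabilityE.
transitivity (\int[mixture]_x ((1 - t) * potential mu x + t * similarity z x)%:E)%E.
  by apply: eq_integral => x _; exact: inner.
rewrite integral_mixture; first last.
- apply/measurable_EFinP/measurable_funD; apply/measurable_funM => //.
    by apply: measurable_fun_continuous; exact: continuous_potential.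
  exact: measurable_similarity.
- by move=> x; rewrite lee_fin addr_ge0 // mulr_ge0 // ?potential_ge0 ?similarity_ge0.
rewrite Rintegral_EFin; last by apply: integrable_lin;
  [exact: integrable_potential|exact: integrable_similarity].
rewrite Rintegral_lin; [|exact: integrable_potential|exact: integrable_similarity].
by rewrite /similarity mdistxx oppr0 expR0 mulr1 -!EFinM -EFinD.
Qed.

End mixture.

Lemma Rintegral_lt_closed_support {R : realType} {T : pointedMetricType R}
    (mu : probability (borel T) R) (x : T) (r e : R) (f g : borel T -> R) :
  closed_support mu x -> 0 < r -> 0 < e ->
  mu.-integrable setT (EFin \o f) -> mu.-integrable setT (EFin \o g) ->
  (forall y, f y <= g y) -> (forall y, mdist x y < r -> f y + e <= g y) ->
  \int[mu]_y f y < \int[mu]_y g y.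
Proof.
move=> supp_x r_gt0 e_gt0 intf intg fg fg_ball.
pose U := [set y | mdist x y < r].
have oU : open U by apply: open_continuous_lt; exact: continuous_mdist.
have mU_gt0 : 0 < fine (mu (U : set (borel T))).
  have mU_le1 := probability_le1 mu (measurable_open oU).
  have mU_pos : (0 < mu (U : set (borel T)))%E by apply: supp_x => //; rewrite /U /= mdistxx.
  by rewrite fine_gt0 // mU_pos (le_lt_trans mU_le1) ?ltry.
have gap := Rintegral_gap (e := e) (measurable_open oU) intf intg.
suff fU : forall y, f y + e * \1_U y <= g y.
  have := gap fU; have := mulr_gt0 e_gt0 mU_gt0.
  lra.
move=> y; rewrite indicE; case: (boolP (y \in U)) => [/[!inE] /fg_ball|_] /=.
  by rewrite mulr1.
by rewrite mulr0 addr0.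
Qed.

Lemma expR_branch_gap {R : realType} (s : R) :
  0 < s <= 1/4 -> 0 < 3 - 2 * expR (- s) - expR s.
Proof.
move=> /andP[s_gt0 s_le].
have uv : expR s * expR (- s) = 1 by rewrite -expRD subrr expR0.
have v_ge := expR_ge1Dx (- s); have v_lt1 : expR (- s) < 1 by rewrite expR_lt1 oppr_lt0.
move: (expR s) (expR (- s)) uv v_ge v_lt1 => u v *.
(* [v (3 - 2 v - u) = (2 v - 1) (1 - v)] since [u v = 1] *)
nra.
Qed.

Section diversity_maximizing.
Context {R : realType} {T : pointedMetricType R}.
Local Notation d := (@mdist R T).
Variable mu : probability (borel T) R.
Hypothesis mu_max : diversity_maximizing mu.
Local Notation P := (potential mu).
Local Notation c := (mean_potential mu).

Lemma mean_potential_le_potential z : c <= P z.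
Proof.
rewrite leNgt; apply/negP => Pz_lt.
have P_ge0 := potential_ge0 mu z; have c_le1 := mean_potential_le1 mu.
pose t := (c - P z) / 2.
have t_ge0 : 0 <= t by rewrite /t; lra.
have t_le1 : 0 <= 1 - t by rewrite /t; lra.
have := mu_max (mixture_probability mu z t_ge0 t_le1).
rewrite energyE energy_mixture lee_fin.
have : t * 2 = c - P z by rewrite /t; field.
clear t_le1; move: (P z) c t Pz_lt P_ge0 c_le1 t_ge0 => p c' u *.
have : u * (2 * (c' - p) - u * (c' - 2 * p + 1)) <= 0 by nra.
nra.
Qed.

Lemma potential_closed_support_gt0 x : closed_support mu x -> 0 < P x.
Proof.
move=> supp_x; rewrite -(Rintegral_cst_probability mu 0).
apply: (Rintegral_lt_closed_support supp_x (r := 1) (e := expR (-1))) => //.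
- exact: finite_measure_integrable_cst.
- exact: integrable_similarity.
- by move=> y; exact: similarity_ge0.
- by move=> y dxy; rewrite add0r ler_expR; lra.
Qed.

Lemma potential_closed_support_le x : closed_support mu x -> P x <= c.
Proof.
move=> supp_x; rewrite leNgt; apply/negP => c_lt.
pose e := (P x - c) / 2; have e_gt0 : 0 < e by rewrite /e; lra.
suff : c < c by rewrite ltxx.
rewrite -[X in X < _](Rintegral_cst_probability mu c).
apply: (Rintegral_lt_closed_support supp_x (r := e) (e := e)) => //.
- exact: finite_measure_integrable_cst.
- exact: integrable_potential.
- exact: mean_potential_le_potential.
- move=> y dxy; have := potential_lipschitz1 mu x y.
  by rewrite ler_norml => /andP[_]; rewrite /e in dxy *; lra.
Qed.

Lemma potential_closed_support x : closed_support mu x -> P x = c.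
Proof.
move=> supp_x; apply/le_anti.
by rewrite potential_closed_support_le // mean_potential_le_potential.
Qed.

Lemma branch_point_notin_closed_support x :
  geodesic_space T -> branch_point x -> ~ closed_support mu x.
Proof.
move=> geoT branch_x supp_x.
have Px := potential_closed_support supp_x.
have c_gt0 : 0 < c by rewrite -Px; exact: potential_closed_support_gt0.
have [s0 s0_gt0 sides] := branch_point_disjoint_sides geoT branch_x.
pose s := Num.min s0 (1/4).
have s_gt0 : 0 < s by rewrite lt_min s0_gt0; lra.
have s_small : 0 < s <= s0 by rewrite s_gt0 ge_min lexx.
have s_le : 0 < s <= 1/4 by rewrite s_gt0 ge_min lexx orbT.
have [za [zb [zc [dza dzb dzc [ab ac bc]]]]] := sides s s_small.
have side_bound z : d x z = s ->
    c <= expR (- s) * c + (expR s - expR (- s)) * restricted_potential mu (side x z) x.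
  move=> <-; rewrite -{2}Px.
  exact: le_trans (mean_potential_le_potential z) (potential_le_side mu x z).
have := restricted_potential_sum3_le mu x (measurable_side x za) (measurable_side x zb)
  (measurable_side x zc) ab ac bc.
rewrite Px => sides_le.
have := side_bound za dza; have := side_bound zb dzb; have := side_bound zc dzc.
have uv : 0 <= expR s - expR (- s) by rewrite subr_ge0 ler_expR; lra.
have := ler_wpM2l uv sides_le.
have := mulr_gt0 c_gt0 (expR_branch_gap s_le).
lra.
Qed.

End diversity_maximizing.

Theorem theorem5p1 (R : realType) (T : pointedMetricType R)
  (mu : probability (borel T) R) :
  compact [set: T] -> R_tree T -> diversity_maximizing mu ->
  forall x : T, branch_point x -> ~ closed_support mu x.
Proof.
move=> _ [ugT _] mu_max x.
exact/branch_point_notin_closed_support/uniquely_geodesic_geodesic.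
Qed.
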